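(* Let $K\subseteq\mathcal I_{int}$ be finite and let $A=(Q,\mathsf{init},2^{\Sigma\cup K\cup\{\mathsf{anch}\}},\delta,F)$ be an NFA whose language $L(A)$ consists of collapsed $K$-interval words over $\Sigma$. Then for every type $\mathsf{seq}$ over $K$, $L(A_{\mathsf{seq}})=\mathsf{Norm}(L(A)\cap W_{\mathsf{seq}})$. Consequently $\bigcup_{\mathsf{seq}}L(A_{\mathsf{seq}})=\mathsf{Norm}(L(A))$, the union ranging over all types over $K$.
   Context: Fix a finite set $\Sigma$ of propositions; $\mathcal I_{int}$ is the set of open, half-open or closed real intervals with endpoints in $\mathbb Z\cup\{-\infty,\infty\}$. Interval words: for finite $K\subseteq\mathcal I_{int}$ and a fresh symbol $\mathsf{anch}$, a $K$-interval word over $\Sigma$ is a finite word $w=a_1\cdots a_n$ with $a_j\subseteq\Sigma\cup K\cup\{\mathsf{anch}\}$ such that exactly one position $i$, denoted $\mathsf{anch}(w)$, has $\mathsf{anch}\in a_i$, and $a_i\subseteq\Sigma\cup\{\mathsf{anch}\}$ there. Position $j$ is $I$-time restricted iff $I\in a_j$. $w$ is collapsed iff every $a_j$ contains at most one element of $K$. $\mathsf{first}(w,I)$, $\mathsf{last}(w,I)$ are the least and greatest $I$-time restricted positions ($\bot$ if none). For a collapsed $K$-interval word $w$, $\mathsf{Norm}(w)$ is the $K$-interval word $b_1\cdots b_n$ with $b_j\cap(\Sigma\cup\{\mathsf{anch}\})=a_j\cap(\Sigma\cup\{\mathsf{anch}\})$ and, for $I\in K$, $I\in b_j$ iff $j\in\{\mathsf{first}(w,I),\mathsf{last}(w,I)\}$;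 for a set $L$ of words, $\mathsf{Norm}(L)=\{\mathsf{Norm}(w):w\in L\}$. Types: for a collapsed $K$-interval word $w$, let $\mathsf{Boundary}(w)$ be the set of positions that are $\mathsf{anch}(w)$ or equal to $\mathsf{first}(w,I)$ or $\mathsf{last}(w,I)$ for some $I\in K$; listing them as $p_1<\dots<p_m$, the type of $w$ is the word $c_1\cdots c_m$ over $K\cup\{\mathsf{anch}\}$ where $c_k$ is the unique element of $a_{p_k}\setminus\Sigma$. A type over $K$ is any word over $K\cup\{\mathsf{anch}\}$ arising this way (it contains $\mathsf{anch}$ exactly once and each $I\in K$ at most twice). $W_{\mathsf{seq}}$ is the set of collapsed $K$-interval words of type $\mathsf{seq}$. The automaton $A_{\mathsf{seq}}$: for $A$ as in the claim and a type $\mathsf{seq}=c_1\cdots c_m$, $A_{\mathsf{seq}}=(Q\times\{1,\dots,m+1\},(\mathsf{init},1),2^{\Sigma\cup K\cup\{\mathsf{anch}\}},\delta_{\mathsf{seq}},F\times\{m+1\})$ where, for $q\in Q$ and a letter $S$: for $1\le i\le m$, (i) if $c_i\in S$ then $\delta_{\mathsf{seq}}((q,i),S)=\delta(q,S)\times\{i+1\}$; (ii) if $c_i\notin S$ and $S\not\subseteq\Sigma$ then $\delta_{\mathsf{seq}}((q,i),S)=\emptyset$; (iii) if $S\subseteq\Sigma$ then $\delta_{\mathsf{seq}}((q,i),S)=\big(\delta(q,S)\cup\bigcup_{I'\in K_i}\delta(q,S\cup\{I'\})\big)\times\{i\}$, where $K_i=\{I'\in K:\exists i'<i\le i''\text{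 with }c_{i'}=c_{i''}=I'\}$; and $\delta_{\mathsf{seq}}((q,m+1),S)=\delta(q,S)\times\{m+1\}$ if $S\subseteq\Sigma$ and $\emptyset$ otherwise. *)

From mathcomp Require Import all_boot.
Set Implicit Arguments. Unset Strict Implicit. Unset Printing Implicit Defensive.

(* Symbols of Sigma ∪ K ∪ {anch}: inl p = proposition p, inr (inl I) = interval I,
   inr (inr tt) = anch.  K is any finite type of (interval) labels. *)
Definition Sym (Sig K : finType) : finType := (Sig + (K + unit))%type.

Section Defs.
Variables (Sig K : finType).
Notation Sym := (Sym Sig K).
Notation letter := {set Sym}.

Definition sProp (p : Sig) : Sym := inl p.
Definition sInt (I : K) : Sym := inr (inl I).
Definition sAnch : Sym := inr (inr tt).

Definition is_sigma (x : Sym) : bool := if x is inl _ then true else false.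
Definition SigmaSet : letter := [set x | is_sigma x].
Definition KSet : letter := [set sInt I | I : K].
Definition Kpart (a : letter) : {set K} := [set I | sInt I \in a].

(* positions are 0-indexed *)
Definition at_ (w : seq letter) (j : nat) : letter := nth set0 w j.

Definition interval_word (w : seq letter) : bool :=
  (count (fun a : letter => sAnch \in a) w == 1) &&
  all (fun a : letter => (sAnch \in a) ==> (Kpart a == set0)) w.

Definition collapsed (w : seq letter) : bool :=
  all (fun a : letter => #|Kpart a| <= 1) w.

Definition restricted_pos (w : seq letter) (I : K) : seq nat :=
  [seq j <- iota 0 (size w) | sInt I \in at_ w j].

(* first / last I-time restricted positions; None stands for ⊥ *)
Definition first (w : seq letter) (I : K) : option nat := ohead (restricted_pos w I).
Definition last_ (w : seq letter) (I : K) : option nat :=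
  if restricted_pos w I is j :: s then Some (last j s) else None.

Definition Norm (w : seq letter) : seq letter :=
  [seq (at_ w j :\: KSet) :|:
       [set sInt I | I in [pred I | (first w I == Some j) || (last_ w I == Some j)]]
  | j <- iota 0 (size w)].

Definition is_boundary (w : seq letter) (j : nat) : bool :=
  (sAnch \in at_ w j) || [exists I : K, (first w I == Some j) || (last_ w I == Some j)].

(* the type of a (collapsed interval) word, as a word over K ∪ {anch} ⊆ Sym *)
Definition type_of (w : seq letter) : seq Sym :=
  [seq odflt sAnch [pick x in at_ w p :\: SigmaSet]
  | p <- iota 0 (size w) & is_boundary w p].

Definition is_type (s : seq Sym) : Prop :=
  exists w, [/\ interval_word w, collapsed w & type_of w = s].

Definition W_seq (s : seq Sym) (w : seq letter) : bool :=
  [&& interval_word w, collapsed w & type_of w == s].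

Record nfa (Q : finType) := Nfa {
  n_init : Q;
  n_delta : Q -> letter -> {set Q};
  n_final : {set Q} }.

Fixpoint reach (Q : finType) (A : nfa Q) (X : {set Q}) (w : seq letter) : {set Q} :=
  if w is a :: w' then reach A (\bigcup_(q in X) n_delta A q a) w' else X.

Definition accepts (Q : finType) (A : nfa Q) (w : seq letter) : bool :=
  [exists q in reach A [set n_init A] w, q \in n_final A].

(* The automaton A_seq.  Paper index i ∈ {1..m+1} is represented by i-1 : 'I_(m+1);
   c_i is nth sAnch s (i-1). *)
Section Aseq.
Variables (Q : finType) (A : nfa Q) (s : seq Sym).
Let m := size s.
Let c (j : nat) : Sym := nth sAnch s j.

(* K_i for paper index i = j+1 : exists i' < i <= i'' with c_i' = c_i'' = I *)
Definition Kidx (j : nat) : {set K} :=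
  [set I | [exists j1 : 'I_m, [exists j2 : 'I_m,
     [&& j1 < j, j <= j2, c j1 == sInt I & c j2 == sInt I]]]].

Definition delta_seq (x : (Q * 'I_(m.+1))%type) (S : letter) : {set (Q * 'I_(m.+1))%type} :=
  let q := x.1 in let j := val x.2 in
  if j < m then
    if c j \in S then [set y | (y.1 \in n_delta A q S) && (val y.2 == j.+1)]
    else if ~~ (S \subset SigmaSet) then set0
    else [set y | ((y.1 \in n_delta A q S) ||
                   [exists I in Kidx j, y.1 \in n_delta A q (sInt I |: S)])
                  && (val y.2 == j)]
  else if S \subset SigmaSet then [set y | (y.1 \in n_delta A q S) && (val y.2 == m)]
  else set0.

Definition A_seq : nfa ((Q * 'I_(m.+1))%type) :=
  Nfa (n_init A, ord0) delta_seq [set y | (y.1 \in n_final A) && (y.2 == ord_max)].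
End Aseq.

End Defs.

(* A run of A_seq on a word w consists of a run of A on a word v together with
   a counter j (the second component of the state) that advances through the
   type s = c_0 ... c_(m-1).  Letter by letter, w and v are related by the
   relation [seq_step]: either c_j occurs in the current letter, which A reads
   unchanged, and the counter advances; or the letter is a set of propositions,
   the counter stays, and A reads it possibly enriched by one interval I in K_j
   (an interval whose first and last occurrences in s enclose position j).

   Soundness: if w, v are step-related along a counter going from 0 to m and v
   is a collapsed interval word, then the positions where the counter advances
   are exactly the boundary positions of v.  This uses that a type never
   contains an interval three times, so an interval read at an advancing
   position is its first or last occurrence in v.  Hence type_of v = s and
   Norm v = w.
   Completeness: conversely, for v in W_s the counter "number of boundary
   positions of v before p" relates Norm v to v step by step. *)

From mathcomp Require Import all_boot.
Set Implicit Arguments. Unset Strict Implicit. Unset Printing Implicit Defensive.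

Section IntervalWords.
Variables (Sig K : finType).
Local Notation Sym := (Sym Sig K).
Local Notation letter := {set Sym}.
Local Notation anch := (sAnch Sig K).
Local Notation sI := (@sInt Sig K).

Lemma path_ltn_last_max (j : nat) (s : seq nat) :
  path ltn j s -> forall x, x \in j :: s -> x <= last j s.
Proof.
elim: s j => [|y s IH] j /=; first by move=> _ x; rewrite inE => /eqP ->.
move=> /andP [ljy py] x; rewrite inE => /orP [/eqP ->|xs]; last exact: IH.
exact: leq_trans (ltnW ljy) (IH _ py y (mem_head _ _)).
Qed.

Lemma mem_filter_iota (P : pred nat) n x :
  x \in [seq j <- iota 0 n | P j] = (x < n) && P x.
Proof. by rewrite mem_filter mem_iota /= add0n andbC. Qed.

Lemma sorted_filter_iota (P : pred nat) n : sorted ltn [seq j <- iota 0 n | P j].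
Proof. by apply: sorted_filter; [exact: ltn_trans|exact: iota_ltn_sorted]. Qed.

Lemma head_filter_iota (P : pred nat) n f :
  ohead [seq j <- iota 0 n | P j] = Some f ->
  [/\ f < n, P f & forall p, p < n -> P p -> f <= p].
Proof.
have := sorted_filter_iota P n; have := mem_filter_iota P n.
case: [seq j <- iota 0 n | P j] => [|h t] //= mf so [<-].
have /andP [hn Ph] : (h < n) && P h by rewrite -mf mem_head.
split=> // p pn Pp; have : p \in h :: t by rewrite mf pn.
rewrite inE => /orP [/eqP -> //|pt].
exact/ltnW/(allP (order_path_min ltn_trans so)).
Qed.

Lemma last_filter_iota (P : pred nat) n l :
  (if [seq j <- iota 0 n | P j] is j :: s then Some (last j s) else None) = Some l ->
  [/\ l < n, P l & forall p, p < n -> P p -> p <= l].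
Proof.
have := sorted_filter_iota P n; have := mem_filter_iota P n.
case: [seq j <- iota 0 n | P j] => [|h t] //= mf so [<-].
have /andP [hn Ph] : (last h t < n) && P (last h t) by rewrite -mf mem_last.
by split=> // p pn Pp; apply: path_ltn_last_max so _ _; rewrite mf pn.
Qed.

Lemma filter_iota_neq_nil (P : pred nat) n p : p < n -> P p ->
  [seq j <- iota 0 n | P j] <> [::].
Proof.
by move=> pn Pp E; have := mem_filter_iota P n p; rewrite E pn Pp.
Qed.

Definition occurs (v : seq letter) (I : K) (p : nat) : bool := sI I \in at_ v p.

Lemma at_default (v : seq letter) p : size v <= p -> at_ v p = set0.
Proof. by move=> h; rewrite /at_ nth_default. Qed.

Lemma mem_at_size (v : seq letter) x p : x \in at_ v p -> p < size v.
Proof. by case: ltnP => // h; rewrite at_default // inE. Qed.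

Lemma first_spec v I f : first v I = Some f ->
  [/\ f < size v, occurs v I f & forall p, occurs v I p -> f <= p].
Proof.
move=> /head_filter_iota [fv of_ fmin]; split=> // p op.
exact: fmin (mem_at_size op) op.
Qed.

Lemma last_spec v I l : last_ v I = Some l ->
  [/\ l < size v, occurs v I l & forall p, occurs v I p -> p <= l].
Proof.
move=> /last_filter_iota [lv ol lmax]; split=> // p op.
exact: lmax (mem_at_size op) op.
Qed.

Lemma first_exists v I p : occurs v I p -> exists f, first v I = Some f.
Proof.
move=> op; rewrite /first /restricted_pos.
case E: [seq j <- iota 0 (size v) | sI I \in at_ v j] => [|h t]; last by exists h.
by case: (filter_iota_neq_nil (mem_at_size op) op).
Qed.

Lemma last_exists v I p : occurs v I p -> exists l, last_ v I = Some l.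
Proof.
move=> op; rewrite /last_ /restricted_pos.
case E: [seq j <- iota 0 (size v) | sI I \in at_ v j] => [|h t]; last by eexists.
by case: (filter_iota_neq_nil (mem_at_size op) op).
Qed.

Lemma nonsigma_cases (x : Sym) : ~~ is_sigma x -> x = anch \/ exists I, x = sI I.
Proof. by case: x => [//|[I|[]]] _; [right; exists I|left]. Qed.

Lemma anch_notK v p I : interval_word v -> anch \in at_ v p -> sI I \in at_ v p -> False.
Proof.
case/andP => _ /allP noK ha hI.
have /implyP := noK _ (mem_nth set0 (mem_at_size hI)).
rewrite -/(at_ v p) ha => /(_ isT) /eqP /setP /(_ I).
by rewrite /Kpart !inE hI.
Qed.

Lemma collapsed_uniq v p I J :
  collapsed v -> sI I \in at_ v p -> sI J \in at_ v p -> I = J.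
Proof.
move=> /allP le1 hI hJ.
have /card_le1P := le1 _ (mem_nth set0 (mem_at_size hI)); rewrite -/(at_ v p).
have hIK : I \in Kpart (at_ v p) by rewrite inE.
by move=> /(_ I hIK J); rewrite inE hJ => /esym/eqP.
Qed.

Definition kind (a : letter) : Sym := odflt anch [pick x in a :\: SigmaSet Sig K].

Lemma type_ofE v :
  type_of v = [seq kind (at_ v p) | p <- iota 0 (size v) & is_boundary v p].
Proof. by []. Qed.

Lemma kind_nonsigma a : ~~ is_sigma (kind a).
Proof. by rewrite /kind; case: pickP => [x|] //=; rewrite !inE => /andP []. Qed.

Lemma kind_unique (a : letter) y : y \in a -> ~~ is_sigma y ->
  (forall x, x \in a -> ~~ is_sigma x -> x = y) -> kind a = y.
Proof.
move=> ya ny uniq_y; rewrite /kind; case: pickP => [x|] /=.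
  by rewrite !inE => /andP [nx xa]; exact: uniq_y.
by move=> /(_ y); rewrite !inE ya ny.
Qed.

Lemma kind_mem a : kind a <> anch -> kind a \in a.
Proof. by rewrite /kind; case: pickP => [x|] //=; rewrite !inE => /andP []. Qed.

Lemma kind_occurs v p I : interval_word v -> collapsed v ->
  occurs v I p -> kind (at_ v p) = sI I.
Proof.
move=> iw cw op; apply: kind_unique => // x xv /nonsigma_cases [ex|[J ex]];
  rewrite ex in xv *; first by case: (anch_notK iw xv op).
by rewrite (collapsed_uniq cw xv op).
Qed.

Lemma type_nonsigma s : is_type s -> forall j, ~~ is_sigma (nth anch s j).
Proof.
move=> [v [_ _ <-]] j; case: (ltnP j (size (type_of v))) => h.
  by have /mapP [p _ ->] := mem_nth anch h; exact: kind_nonsigma.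
by rewrite nth_default.
Qed.

(* ... and no interval three times: the middle boundary position would be
   neither its first nor its last occurrence. *)
Lemma type_no_triple s : is_type s -> forall a b c I, a < b -> b < c -> c < size s ->
  nth anch s a = sI I -> nth anch s b = sI I -> nth anch s c = sI I -> False.
Proof.
move=> [v [iw cw <-]] a b c I ab bc; rewrite type_ofE size_map.
set B := [seq p <- iota 0 (size v) | is_boundary v p] => cB.
have bB := ltn_trans bc cB; have aB := ltn_trans ab bB.
have incr := sorted_ltn_nth ltn_trans 0 (sorted_filter_iota (is_boundary v) (size v)).
have hab : nth 0 B a < nth 0 B b by exact: incr.
have hbc : nth 0 B b < nth 0 B c by exact: incr.
rewrite !(nth_map 0) // => ka kb kc.
have occ p : kind (at_ v p) = sI I -> occurs v I p.
  by move=> k; rewrite /occurs -k; apply: kind_mem; rewrite k.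
have [oa ob oc] := And3 (occ _ ka) (occ _ kb) (occ _ kc).
have /(mem_nth 0) := bB; rewrite mem_filter /is_boundary => /andP [].
case/orP=> [ha|/existsP [J /orP [] /eqP H]] _; first exact: anch_notK iw ha ob.
  have [_ oJ fmin] := first_spec H; rewrite (collapsed_uniq cw ob oJ) in oa.
  by have := fmin _ oa; rewrite leqNgt hab.
have [_ oJ lmax] := last_spec H; rewrite (collapsed_uniq cw ob oJ) in oc.
by have := lmax _ oc; rewrite leqNgt hbc.
Qed.

Lemma mem_norm_letter (a : letter) (P : pred K) x :
  x \in (a :\: KSet Sig K) :|: [set sI I | I in P] =
  match x with inr (inl J) => P J | _ => x \in a end.
Proof.
have inK y : (y \in KSet Sig K) = ~~ is_sigma y && (y != anch).
  apply/imsetP/idP => [[I _ ->] //|]; case: y => [//|[J|[]]] // _; by exists J.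
case: x => [σ|[J|[]]]; rewrite in_setU in_setD inK /=.
- by case: imsetP => [[I]|] //; rewrite orbF.
- apply/imsetP/idP => [[I PI [->]] //|PJ]; by exists J.
- by case: imsetP => [[I]|] //; rewrite orbF.
Qed.

Lemma KidxP s j I : reflect (exists j1 j2,
  [/\ j1 < j, j <= j2, j2 < size s, nth anch s j1 = sI I & nth anch s j2 = sI I])
  (I \in Kidx s j).
Proof.
rewrite /Kidx inE; apply: (iffP existsP) => [[j1 /existsP [j2]]|[j1 [j2 [h1 h2 h3 c1 c2]]]].
  by case/and4P=> h1 h2 /eqP c1 /eqP c2; exists j1, j2; split.
have j1s : j1 < size s by apply: leq_ltn_trans h3; exact: leq_trans (ltnW h1) h2.
exists (Ordinal j1s); apply/existsP; exists (Ordinal h3).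
by rewrite /= h1 h2 c1 c2 !eqxx.
Qed.

(* One step of A_seq at counter j reading a, while A reads b, the counter
   moving to j'. *)
Definition seq_step (s : seq Sym) (a b : letter) (j j' : nat) : Prop :=
  (j < size s /\ nth anch s j \in a /\ b = a /\ j' = j.+1) \/
  (a \subset SigmaSet Sig K /\ j' = j /\
     (b = a \/ (j < size s /\ exists2 I, I \in Kidx s j & b = sI I |: a))).

Lemma counter_mono (jf : nat -> nat) n : (forall p, p < n -> jf p <= jf p.+1) ->
  forall p p', p <= p' -> p' <= n -> jf p <= jf p'.
Proof.
move=> h p; elim=> [|p' IH]; first by rewrite leqn0 => /eqP ->.
rewrite leq_eqVlt => /orP [/eqP -> //|pp] pn.
exact: leq_trans (IH pp (ltnW pn)) (h _ pn).
Qed.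

Lemma counter_hits (jf : nat -> nat) n :
  (forall p, p < n -> jf p.+1 = jf p \/ jf p.+1 = (jf p).+1) ->
  forall k, jf 0 <= k -> k < jf n -> exists p, [/\ p < n, jf p = k & jf p.+1 = k.+1].
Proof.
elim: n => [|n IH] h k h0 hn; first by move: hn; rewrite ltnNge h0.
case: (ltnP k (jf n)) => kn.
  have [|p [pn jp jp']] := IH _ k h0 kn; first by move=> p pn; apply/h/ltnW.
  by exists p; split=> //; exact: ltnW.
exists n; have [e|e] := h n (ltnSn n); rewrite e in hn.
  by move: hn; rewrite ltnNge kn.
have ek : jf n = k by apply/eqP; rewrite eqn_leq kn -ltnS.
by rewrite -ek -e.
Qed.

Section Soundness.
Variables (s : seq Sym) (w v : seq letter) (jf : nat -> nat).
Hypotheses (iw : interval_word v) (cw : collapsed v) (sz : size v = size w).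
Hypothesis steps : forall p, p < size w -> seq_step s (at_ w p) (at_ v p) (jf p) (jf p.+1).
Hypotheses (jf0 : jf 0 = 0) (jfn : jf (size w) = size s).
Hypothesis s_nonsigma : forall j, ~~ is_sigma (nth anch s j).
Hypothesis s_no_triple : forall a b c I, a < b -> b < c -> c < size s ->
  nth anch s a = sI I -> nth anch s b = sI I -> nth anch s c = sI I -> False.

Local Notation n := (size w).

Lemma jf_succ p : p < n -> jf p.+1 = jf p \/ jf p.+1 = (jf p).+1.
Proof. by move=> /steps [[_ [_ [_ ->]]]|[_ [-> _]]]; [right|left]. Qed.

Lemma jf_mono p p' : p <= p' -> p' <= n -> jf p <= jf p'.
Proof. by apply: (counter_mono (n := n)) => q /jf_succ [->|->]. Qed.

Lemma advance_case p : p < n -> jf p.+1 = (jf p).+1 ->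
  [/\ jf p < size s, nth anch s (jf p) \in at_ w p & at_ v p = at_ w p].
Proof.
move=> /steps [[h1 [h2 [h3 _]]] //|[_ [-> _]] e].
by have := n_Sn (jf p); rewrite -e.
Qed.

Lemma stay_case p : p < n -> jf p.+1 <> (jf p).+1 ->
  [/\ jf p.+1 = jf p, at_ w p \subset SigmaSet Sig K &
   (at_ v p = at_ w p \/
    exists2 I, I \in Kidx s (jf p) & at_ v p = sI I |: at_ w p)].
Proof.
move=> /steps [[_ [_ [_ ->]]] //|[h1 [h2 h3]] _]; split=> //.
by case: h3 => [|[_ h3]]; [left|right].
Qed.

Lemma sigma_notK (a : letter) I : a \subset SigmaSet Sig K -> sI I \in a -> False.
Proof. by move=> /subsetP h /h; rewrite inE. Qed.

Lemma sigma_notanch (a : letter) : a \subset SigmaSet Sig K -> anch \in a -> False.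
Proof. by move=> /subsetP h /h; rewrite inE. Qed.

Lemma advance_nonsigma p : p < n -> jf p.+1 = (jf p).+1 ->
  forall x, x \in at_ v p -> ~~ is_sigma x -> x = nth anch s (jf p).
Proof.
move=> pn e x xv nx; have [_ cv ev] := advance_case pn e; rewrite -ev in cv.
have [xA|[J xJ]] := nonsigma_cases nx; subst x;
  have [cA|[I cI]] := nonsigma_cases (s_nonsigma (jf p)); rewrite ?cA ?cI in cv * => //.
- by case: (anch_notK iw xv cv).
- by case: (anch_notK iw cv xv).
- by rewrite (collapsed_uniq cw xv cv).
Qed.

Lemma kind_advance p : p < n -> jf p.+1 = (jf p).+1 -> kind (at_ v p) = nth anch s (jf p).
Proof.
move=> pn e; have [_ cw' ev] := advance_case pn e.
apply: kind_unique; [by rewrite ev|exact: s_nonsigma|exact: advance_nonsigma].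
Qed.

Lemma occurs_cases p I : p < n -> occurs v I p ->
  (jf p.+1 = (jf p).+1 /\ nth anch s (jf p) = sI I) \/
  (jf p.+1 = jf p /\ I \in Kidx s (jf p)).
Proof.
move=> pn op; case: (eqVneq (jf p.+1) (jf p).+1) => e.
  by left; split=> //; symmetry; apply: advance_nonsigma.
have [e1 sub [ev|[J JK ev]]] := stay_case pn (elimN eqP e).
  by move: op; rewrite /occurs ev => /(sigma_notK sub).
move: op; rewrite /occurs ev => /setU1P [[eJ]|/(sigma_notK sub) //].
by right; rewrite eJ.
Qed.

Lemma occurs_advance p I : p < n -> jf p.+1 = (jf p).+1 ->
  nth anch s (jf p) = sI I -> occurs v I p.
Proof. by move=> pn e c; have [_ h ev] := advance_case pn e; rewrite /occurs ev -c. Qed.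

Lemma advance_exists k : k < size s -> exists p, [/\ p < n, jf p = k & jf p.+1 = k.+1].
Proof. by move=> ks; apply: counter_hits; [exact: jf_succ|rewrite jf0|rewrite jfn]. Qed.

(* An interval read at an advancing position p is first or last there:
   otherwise occurrences before and after p would give three copies in s. *)
Lemma advance_first_or_last p I : p < n -> jf p.+1 = (jf p).+1 ->
  nth anch s (jf p) = sI I -> first v I = Some p \/ last_ v I = Some p.
Proof.
move=> pn e c; have op := occurs_advance pn e c.
have [f ef] := first_exists op; have [l el] := last_exists op.
have [fs of_ /(_ _ op) fp] := first_spec ef; have [ls ol /(_ _ op) pl] := last_spec el.
rewrite sz in fs ls.
case: (eqVneq f p) => [<-|nfp]; first by left.
case: (eqVneq l p) => [<-|nlp]; first by right.
have fp' : f < p by rewrite ltn_neqAle nfp.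
have pl' : p < l by rewrite ltn_neqAle eq_sym nlp.
have [a [ha ca]] : exists a, a < jf p /\ nth anch s a = sI I.
  have [[ef1 cf]|[_ /KidxP [j1 [_ [h1 _ _ c1 _]]]]] := occurs_cases fs of_.
    by exists (jf f); split=> //; rewrite -ltnS -ef1 ltnS; exact: jf_mono (ltnW pn).
  by exists j1; split=> //; apply: leq_trans h1 _; exact: jf_mono (ltnW pn).
have [b [hb bs cb]] : exists b, [/\ (jf p).+1 <= b, b < size s & nth anch s b = sI I].
  have [[el1 cl]|[_ /KidxP [_ [j2 [_ h2 h3 _ c2]]]]] := occurs_cases ls ol.
    exists (jf l); have [] := advance_case ls el1; split=> //.
    by rewrite -e; exact: jf_mono (ltnW ls).
  by exists j2; split=> //; apply: leq_trans h2; rewrite -e; exact: jf_mono (ltnW ls).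
by case: (s_no_triple ha hb bs ca c cb).
Qed.

(* An interval added at a staying position p has occurrences in v at advancing
   positions strictly before and strictly after p. *)
Lemma stay_not_first_last p I : p < n -> jf p.+1 = jf p -> I \in Kidx s (jf p) ->
  first v I <> Some p /\ last_ v I <> Some p.
Proof.
move=> pn e /KidxP [j1 [j2 [h1 h2 h3 c1 c2]]].
have j1s : j1 < size s by apply: leq_ltn_trans h3; exact: leq_trans (ltnW h1) h2.
have [p1 [p1n jp1 jp1']] := advance_exists j1s.
have [p2 [p2n jp2 jp2']] := advance_exists h3.
have o1 : occurs v I p1 by apply: occurs_advance; rewrite ?jp1.
have o2 : occurs v I p2 by apply: occurs_advance; rewrite ?jp2.
split=> H.
  have [_ _ /(_ _ o1) pp1] := first_spec H.
  by have := leq_trans h1 (jf_mono pp1 (ltnW p1n)); rewrite jp1 ltnn.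
have [_ _ /(_ _ o2)] := last_spec H; rewrite leq_eqVlt => /orP [/eqP ep|p2p].
  by move: jp2 jp2'; rewrite ep e => -> /n_Sn.
by have := leq_trans (jf_mono p2p (ltnW pn)) h2; rewrite jp2' ltnn.
Qed.

Lemma boundary_advance p : p < n -> is_boundary v p = (jf p.+1 == (jf p).+1).
Proof.
move=> pn; case: (eqVneq (jf p.+1) (jf p).+1) => e.
  rewrite /is_boundary; have [_ cv ev] := advance_case pn e.
  have [cA|[I cI]] := nonsigma_cases (s_nonsigma (jf p)); first by rewrite ev -cA cv.
  apply/orP; right; apply/existsP; exists I.
  by have [->|->] := advance_first_or_last pn e cI; rewrite eqxx ?orbT.
have [e1 sub oth] := stay_case pn (elimN eqP e).
apply/negbTE; rewrite /is_boundary negb_or; apply/andP; split.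
  apply/negP; case: oth => [->|[J _ ->]]; first exact: sigma_notanch.
  by case/setU1P => [|/(sigma_notanch sub)].
apply/existsP => [[I /orP [] /eqP H]];
  [have [_ op _] := first_spec H|have [_ op _] := last_spec H];
  (have [[e2 _]|[_ IK]] := occurs_cases pn op; first by move: e1; rewrite e2 => /esym/n_Sn);
  by have [] := stay_not_first_last pn e1 IK.
Qed.

Lemma advance_labels l : l <= n ->
  [seq nth anch s (jf p) | p <- iota 0 l & jf p.+1 == (jf p).+1] =
  [seq nth anch s k | k <- iota 0 (jf l)].
Proof.
elim: l => [|l IH] ln; first by rewrite jf0.
rewrite -addn1 iotaD filter_cat map_cat IH ?(ltnW ln) //= addn1.
have [e|e] := jf_succ ln; rewrite e.
  by rewrite eqn_leq ltnn andbF cats0.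
by rewrite eqxx -addn1 iotaD map_cat.
Qed.

Lemma sound_type : type_of v = s.
Proof.
rewrite type_ofE sz.
rewrite (@eq_in_filter _ _ (fun p => jf p.+1 == (jf p).+1)); last first.
  by move=> p; rewrite mem_iota add0n /= => pn; exact: boundary_advance.
set F := filter _ _.
have -> : [seq kind (at_ v p) | p <- F] = [seq nth anch s (jf p) | p <- F].
  apply/eq_in_map => p; rewrite mem_filter mem_iota add0n /= => /andP [/eqP e pn].
  exact: kind_advance.
by rewrite advance_labels // jfn; exact: mkseq_nth.
Qed.

Lemma sound_norm : Norm v = w.
Proof.
apply: (@eq_from_nth _ set0); first by rewrite size_map size_iota sz.
rewrite size_map size_iota sz => p pn.
rewrite (nth_map 0) ?size_iota ?sz // nth_iota ?sz // add0n.
apply/setP => x; rewrite mem_norm_letter -/(at_ w p).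
case: (eqVneq (jf p.+1) (jf p).+1) => e.
  have [_ _ ev] := advance_case pn e.
  case: x => [σ|[J|[]]]; rewrite ?ev //=; rewrite -ev.
  apply/idP/idP => [/orP [/eqP H|/eqP H]|H].
  - by have [_ ? _] := first_spec H.
  - by have [_ ? _] := last_spec H.
  have c := advance_nonsigma pn e H isT.
  by have [->|->] := advance_first_or_last pn e (esym c); rewrite eqxx ?orbT.
have [_ sub oth] := stay_case pn (elimN eqP e).
case: x => [σ|[J|[]]]; try by case: oth => [->|[I _ ->]] //; rewrite in_setU1.
have -> : (sI J \in at_ w p) = false by apply/negP => /(sigma_notK sub).
apply/negP => H; have : is_boundary v p.
  by rewrite /is_boundary; apply/orP; right; apply/existsP; exists J.
by rewrite boundary_advance // (negbTE e).
Qed.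

End Soundness.

Section Completeness.
Variables (v : seq letter).
Hypotheses (iw : interval_word v) (cw : collapsed v).

Local Notation bnd := (is_boundary v).

Definition boundary_count (p : nat) : nat := count bnd (iota 0 p).
Local Notation jc := boundary_count.

Lemma boundary_countS p : jc p.+1 = jc p + bnd p.
Proof. by rewrite /jc -addn1 iotaD count_cat /= addn0. Qed.

Lemma boundary_count_mono p p' : p <= p' -> jc p <= jc p'.
Proof. by move=> h; rewrite /jc -(subnKC h) iotaD count_cat leq_addr. Qed.

Lemma boundary_count_size : jc (size v) = size (type_of v).
Proof. by rewrite type_ofE size_map size_filter. Qed.

Lemma nth_type_of p : p < size v -> bnd p -> nth anch (type_of v) (jc p) = kind (at_ v p).
Proof.
move=> pn b; rewrite type_ofE.
have -> : iota 0 (size v) = iota 0 p ++ p :: iota p.+1 (size v - p.+1).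
  by rewrite -[p :: _]/(iota p (size v - p.+1).+1) subnSK // -iotaD subnKC // ltnW.
by rewrite filter_cat map_cat nth_cat size_map size_filter ltnn subnn /= b.
Qed.

Lemma at_Norm p : p < size v -> at_ (Norm v) p =
  (at_ v p :\: KSet Sig K) :|:
  [set sI I | I in [pred I | (first v I == Some p) || (last_ v I == Some p)]].
Proof. by move=> pn; rewrite /at_ /Norm (nth_map 0) ?size_iota // nth_iota. Qed.

Lemma not_boundary_first_last p J : ~~ bnd p ->
  (first v J == Some p) || (last_ v J == Some p) = false.
Proof.
move=> nb; apply/negbTE/negP => H; move: nb; rewrite /is_boundary negb_or => /andP [_].
by move=> /negP; apply; apply/existsP; exists J.
Qed.

Lemma Norm_boundary p : p < size v -> bnd p -> at_ (Norm v) p = at_ v p.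
Proof.
move=> pn b; apply/setP => x; rewrite at_Norm // mem_norm_letter.
case: x => [σ|[J|[]]] //=.
apply/idP/idP => [/orP [/eqP H|/eqP H]|H].
- by have [_ ? _] := first_spec H.
- by have [_ ? _] := last_spec H.
move: b; rewrite /is_boundary => /orP [/anch_notK -/(_ J iw H) //|/existsP [I /orP [] /eqP HI]].
- have [_ oI _] := first_spec HI; rewrite (collapsed_uniq cw H oI) in HI *.
  by rewrite HI eqxx.
- have [_ oI _] := last_spec HI; rewrite (collapsed_uniq cw H oI) in HI *.
  by rewrite HI eqxx orbT.
Qed.

Lemma kind_boundary p : bnd p -> kind (at_ v p) \in at_ v p.
Proof.
move=> b; case: (eqVneq (kind (at_ v p)) anch) => [kA|/eqP kA]; last exact: kind_mem.
move: b; rewrite kA /is_boundary => /orP [//|/existsP [I /orP [] /eqP H]].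
- have [_ oI _] := first_spec H.
  by move: kA; rewrite (kind_occurs iw cw oI).
- have [_ oI _] := last_spec H.
  by move: kA; rewrite (kind_occurs iw cw oI).
Qed.

Lemma Norm_not_boundary_sigma p : p < size v -> ~~ bnd p ->
  at_ (Norm v) p \subset SigmaSet Sig K.
Proof.
move=> pn b; apply/subsetP => x; rewrite at_Norm // mem_norm_letter.
case: x => [σ|[J|[]]]; first by rewrite inE.
  by rewrite /= not_boundary_first_last.
by move=> ha; move: b; rewrite /is_boundary ha.
Qed.

(* At a non-boundary position v differs from Norm v at most by an interval I
   whose first and last occurrences in v lie on either side of p; these are
   boundary positions, so I belongs to K_(jc p). *)
Lemma Norm_not_boundary p : p < size v -> ~~ bnd p ->
  at_ v p = at_ (Norm v) p \/
  (jc p < size (type_of v) /\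
   exists2 I, I \in Kidx (type_of v) (jc p) & at_ v p = sI I |: at_ (Norm v) p).
Proof.
move=> pn b; case: (pickP (fun J => sI J \in at_ v p)) => [J hJ|none]; last first.
  left; apply/setP => x; rewrite at_Norm // mem_norm_letter.
  by case: x => [σ|[J|[]]] //=; rewrite not_boundary_first_last // none.
right.
have [f ef] := first_exists hJ; have [l el] := last_exists hJ.
have [fs of_ /(_ _ hJ) fp] := first_spec ef; have [ls ol /(_ _ hJ) pl] := last_spec el.
have bf : bnd f by apply/orP; right; apply/existsP; exists J; rewrite ef eqxx.
have bl : bnd l by apply/orP; right; apply/existsP; exists J; rewrite el eqxx orbT.
have fp' : f < p by rewrite ltn_neqAle fp andbT; apply: contraNneq b => <-.
have ls' : jc l < size (type_of v).
  rewrite -boundary_count_size; apply: leq_trans (boundary_count_mono ls).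
  by rewrite boundary_countS bl addn1.
split; first exact: leq_ltn_trans (boundary_count_mono pl) ls'.
exists J.
  apply/KidxP; exists (jc f), (jc l); split=> //.
  - by apply: leq_trans (boundary_count_mono fp'); rewrite boundary_countS bf addn1.
  - exact: boundary_count_mono.
  - by rewrite nth_type_of // (kind_occurs iw cw of_).
  - by rewrite nth_type_of // (kind_occurs iw cw ol).
apply/setP => x; rewrite in_setU1 at_Norm // mem_norm_letter.
case: x => [σ|[J'|[]]] //.
case: (eqVneq J' J) => [->|nJ]; first by rewrite eqxx hJ.
rewrite /= not_boundary_first_last //.
have -> : (inr (inl J') == sI J) = false by apply/eqP => [[E]]; rewrite E eqxx in nJ.
by apply/negP => H; rewrite (collapsed_uniq cw H hJ) eqxx in nJ.
Qed.

Lemma Norm_steps p : p < size (Norm v) ->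
  seq_step (type_of v) (at_ (Norm v) p) (at_ v p) (jc p) (jc p.+1).
Proof.
rewrite size_map size_iota => pn; rewrite boundary_countS.
case: (boolP (bnd p)) => b; last first.
  right; rewrite addn0; split; first exact: Norm_not_boundary_sigma.
  split=> //; have [->|[h1 h2]] := Norm_not_boundary pn b; [by left|by right].
left; rewrite addn1 nth_type_of // Norm_boundary //; split; last first.
  by split; [exact: kind_boundary|split].
rewrite -boundary_count_size; apply: leq_trans (boundary_count_mono pn).
by rewrite boundary_countS b addn1.
Qed.

End Completeness.
End IntervalWords.

Section Simulation.
Variables (Sig K Q : finType) (A : nfa Sig K Q).
Local Notation Sym := (Sym Sig K).
Local Notation letter := {set Sym}.
Local Notation anch := (sAnch Sig K).
Local Notation sI := (@sInt Sig K).

Lemma reach_set (Q' : finType) (B : nfa Sig K Q') w : forall X q',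
  q' \in reach B X w <-> exists2 q, q \in X & q' \in reach B [set q] w.
Proof.
elim: w => [|a w IH] X q' /=.
  split=> [h|[q qX]]; first by exists q' => //; rewrite inE.
  by rewrite inE => /eqP ->.
split=> [/IH [q1 /bigcupP [q qX q1d] h]|[q qX]].
  by exists q => //; apply/IH; exists q1 => //; rewrite big_set1.
move=> /IH [q1]; rewrite big_set1 => q1d h.
by apply/IH; exists q1 => //; apply/bigcupP; exists q.
Qed.

Lemma reach_cons (Q' : finType) (B : nfa Sig K Q') q a w q' :
  q' \in reach B [set q] (a :: w) <->
  exists2 q1, q1 \in n_delta B q a & q' \in reach B [set q1] w.
Proof.
rewrite /= big_set1; split=> [/reach_set [q1]|[q1 q1d h]]; first by exists q1.
by apply/reach_set; exists q1.
Qed.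

Lemma ord_not_lt n (i : 'I_n.+1) : (i < n) = false -> val i = n.
Proof. by move=> h; apply/eqP; rewrite eqn_leq -ltnS ltn_ord leqNgt h. Qed.

Lemma delta_seq_step s (x y : Q * 'I_(size s).+1) a :
  y \in delta_seq A x a ->
  exists2 b, y.1 \in n_delta A x.1 b & seq_step s a b (val x.2) (val y.2).
Proof.
rewrite /delta_seq /=; case: ifP => jm; last first.
  case: ifP => sub; rewrite inE // => /andP [h1 /eqP h2]; exists a => //.
  by right; split=> //; split; [rewrite h2 (ord_not_lt jm)|left].
case: ifP => cj; first by rewrite inE => /andP [h1 /eqP h2]; exists a => //; left.
case: ifP => sub; first by rewrite inE.
rewrite inE => /andP [/orP [h1|/existsP [I /andP [IK h1]]] /eqP h2].
  by exists a => //; right; split; [exact/negbFE|split=> //; left].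
exists (sI I |: a) => //; right; split; first exact/negbFE.
by split=> //; right; split=> //; exists I.
Qed.

Lemma step_delta_seq s (s_nonsigma : forall j, ~~ is_sigma (nth anch s j))
  (x y : Q * 'I_(size s).+1) a b :
  seq_step s a b (val x.2) (val y.2) -> y.1 \in n_delta A x.1 b -> y \in delta_seq A x a.
Proof.
rewrite /delta_seq /= => [[[jm [cj [eb e]]]|[sub [e oth]]]] hd.
  by rewrite jm cj inE -eb hd e eqxx.
have cn : (nth anch s (val x.2) \in a) = false.
  by apply/negP => /(subsetP sub); rewrite inE (negbTE (s_nonsigma _)).
case: ifP => jm.
  rewrite cn sub /= inE e eqxx andbT.
  case: oth => [eb|[_ [I IK eb]]]; first by rewrite -eb hd.
  by apply/orP; right; apply/existsP; exists I; rewrite IK -eb.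
rewrite sub inE e (ord_not_lt jm).
by case: oth => [eb|[h _]]; [rewrite -eb hd eqxx|rewrite h in jm].
Qed.

Lemma A_seq_run_inv s (w : seq letter) : forall (x x' : Q * 'I_(size s).+1),
  x' \in reach (A_seq A s) [set x] w ->
  exists v, exists jf : nat -> nat,
    [/\ size v = size w, jf 0 = val x.2, jf (size w) = val x'.2,
     (forall p, p < size w -> seq_step s (at_ w p) (at_ v p) (jf p) (jf p.+1)) &
     x'.1 \in reach A [set x.1] v].
Proof.
elim: w => [|a w IH] x x'.
  rewrite /= inE => /eqP ->; exists [::], (fun _ => val x.2).
  by split=> //; rewrite inE.
move=> /reach_cons [y hy /IH [v [jf [h1 h2 h3 h4 h5]]]].
have [b hb st] := delta_seq_step hy.
exists (b :: v), (fun p => if p is p'.+1 then jf p' else val x.2); split=> //=.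
- by rewrite h1.
- by case=> [_|p pn] /=; [rewrite /at_ /= h2|exact: h4].
- by apply/reach_cons; exists y.1.
Qed.

Lemma seq_step_bound s (a b : letter) j j' :
  seq_step s a b j j' -> j < (size s).+1 -> j' < (size s).+1.
Proof. by case=> [[h [_ [_ ->]]]|[_ [-> _]]]. Qed.

Lemma A_seq_run s (s_nonsigma : forall j, ~~ is_sigma (nth anch s j))
  (w : seq letter) : forall v (jf : nat -> nat) q' (x : Q * 'I_(size s).+1),
  val x.2 = jf 0 -> size v = size w ->
  (forall p, p < size w -> seq_step s (at_ w p) (at_ v p) (jf p) (jf p.+1)) ->
  q' \in reach A [set x.1] v ->
  exists x', [/\ x'.1 = q', val x'.2 = jf (size w) & x' \in reach (A_seq A s) [set x] w].
Proof.
elim: w => [|a w IH] [|b v] jf q' x // e0 sz hs.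
  by rewrite inE => /eqP ->; exists x; split=> //; rewrite inE.
move=> /reach_cons [q1 hq1 hr].
have st0 : seq_step s a b (jf 0) (jf 1) by exact: (hs 0).
have lt1 : jf 1 < (size s).+1 by apply: seq_step_bound st0 _; rewrite -e0 ltn_ord.
have sz' : size v = size w by case: sz.
have hs' p : p < size w -> seq_step s (at_ w p) (at_ v p) (jf p.+1) (jf p.+2).
  exact: (hs p.+1).
have [x' [h1 h2 h3]] := IH v (fun p => jf p.+1) q' (q1, Ordinal lt1) erefl sz' hs' hr.
exists x'; split=> //; apply/reach_cons; exists (q1, Ordinal lt1) => //.
by apply: (step_delta_seq s_nonsigma (b := b)); rewrite ?e0.
Qed.

End Simulation.

Lemma A_seq_language (Sig K Q : finType) (A : nfa Sig K Q) (s : seq (Sym Sig K)) :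
  (forall w, accepts A w -> interval_word w && collapsed w) -> is_type s ->
  forall w, accepts (A_seq A s) w <-> exists2 v, accepts A v && W_seq s v & w = Norm v.
Proof.
move=> hA ts w; split.
  move=> /existsP [x' /andP [hr]]; rewrite inE => /andP [hf /eqP hm].
  have [v [jf [sz j0 jn hs hv]]] := A_seq_run_inv hr.
  rewrite hm /= in jn.
  have av : accepts A v by apply/existsP; exists x'.1; rewrite hv hf.
  have /andP [iw cw] := hA _ av.
  have sound_s := sound_type iw cw sz hs j0 jn (type_nonsigma ts) (type_no_triple ts).
  exists v; first by rewrite av /W_seq iw cw sound_s eqxx.
  by rewrite (sound_norm iw cw sz hs j0 jn (type_nonsigma ts) (type_no_triple ts)).
move=> [v /andP [/existsP [q' /andP [hq hf]] /and3P [iw cw /eqP tv]] ->]; subst s.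
have sz : size v = size (Norm v) by rewrite size_map size_iota.
have [x' [h1 h2 h3]] := A_seq_run (type_nonsigma ts) (x := (n_init A, ord0))
  (jf := boundary_count v) erefl sz (Norm_steps iw cw) hq.
apply/existsP; exists x'; rewrite h3 inE h1 hf /=.
by apply/eqP/val_inj; rewrite h2 /= -sz boundary_count_size.
Qed.

Theorem lemma2 (Sig K Q : finType) (A : nfa Sig K Q) :
  (forall w, accepts A w -> interval_word w && collapsed w) ->
  (forall s : seq (Sym Sig K), is_type s ->
     forall w, accepts (A_seq A s) w <->
               exists2 v, accepts A v && W_seq s v & w = Norm v) /\
  (forall w, (exists2 s : seq (Sym Sig K), is_type s & accepts (A_seq A s) w) <->
             exists2 v, accepts A v & w = Norm v).
Proof.
move=> hA; have language := A_seq_language hA; split=> // w; split.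
  by move=> [s ts /(language s ts w).1 [v /andP [av _] ->]]; exists v.
(* every accepted v lies in W_(type_of v), and type_of v is a type *)
move=> [v av ->]; have /andP [iw cw] := hA _ av.
have ts : is_type (type_of v) by exists v.
exists (type_of v) => //; apply/(language _ ts); exists v => //.
by rewrite av /W_seq iw cw eqxx.
Qed.
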